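(* Let $I\subseteq\mathbb{R}$ be an interval containing $0$ and let $f:I\to\mathbb{R}$ be such that $f|_{I\cap[0,\infty)}$ is convex and $f(-x)=-f(x)$ whenever $x$ and $-x$ both belong to $I$. Then for every family of points $a_1,\dots,a_n\in I$ and every family of weights $p_1,\dots,p_n\in[0,\infty)$ with $\sum_{k=1}^n p_k=1$ and \[ \sum_{k=1}^n p_k a_k+\min\{a_1,\dots,a_n\}\ge0, \] we have \[ f\left(\sum_{k=1}^n p_k a_k\right)\le\sum_{k=1}^n p_k f(a_k). \] *)

From mathcomp Require Import all_boot all_order all_algebra.
From mathcomp Require Import reals.
Set Implicit Arguments. Unset Strict Implicit. Unset Printing Implicit Defensive.
Import Order.TTheory GRing.Theory Num.Theory.
Local Open Scope ring_scope.

Definition is_interval_set (R : realType) (I : R -> Prop) : Prop :=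
  forall x y z : R, I x -> I z -> x <= y -> y <= z -> I y.

Definition convex_on (R : realType) (S : R -> Prop) (f : R -> R) : Prop :=
  forall (x y t : R), S x -> S y -> 0 <= t -> t <= 1 ->
    f (t * x + (1 - t) * y) <= t * f x + (1 - t) * f y.

From mathcomp Require Import all_boot all_order all_algebra.
From mathcomp Require Import reals.
From mathcomp Require Import ring lra.
Set Implicit Arguments. Unset Strict Implicit. Unset Printing Implicit Defensive.
Import Order.TTheory GRing.Theory Num.Theory.
Local Open Scope ring_scope.

(* Split every point into its positive part and its negative part,
   [a_k = c_k - b_k], so that oddness gives [f a_k = f c_k - f b_k].  Jensen's
   inequality on [I ∩ [0, oo)] bounds [f C] from above by the [c]-average, with
   [C = sum p_k c_k].  Convexity together with [f 0 = 0] says that [f x / x] is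
   nondecreasing on the nonnegative half of [I]; the hypothesis [-a_k <= s] for
   [s = sum p_k a_k] (a consequence of [s + min a >= 0]) places every [b_k]
   in [[0, s]], so [sum p_k f b_k <= (B / s) f s] and [f C >= (C / s) f s].
   Subtracting gives [f s = ((C - B) / s) f s] below the [a]-average. *)

Lemma interval_convex_comb (R : realType) (I : R -> Prop) (x y t : R) :
  is_interval_set I -> I x -> I y -> 0 <= t -> t <= 1 ->
  I (t * x + (1 - t) * y).
Proof.
move=> hI Ix Iy t0 t1; have [xy|yx] := leP x y.
  by apply: (hI x _ y) => //; nra.
by apply: (hI y _ x) => //; nra.
Qed.

Lemma wavg_ge (R : realType) (n : nat) (m : R) (a p : 'I_n.+1 -> R) :
  (forall k, 0 <= p k) -> \sum_(k < n.+1) p k = 1 ->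
  (forall k, m <= a k) -> m <= \sum_(k < n.+1) p k * a k.
Proof.
move=> hp hsum hm; rewrite -[m]mul1r -hsum mulr_suml.
by apply: ler_sum => k _; rewrite ler_wpM2l.
Qed.

Lemma max0_subr_max0N (R : realDomainType) (x : R) :
  Num.max x 0 - Num.max (- x) 0 = x.
Proof.
case: (leP 0 x) => hx; first by rewrite max_r ?oppr_le0 // subr0.
by rewrite max_l ?oppr_ge0 ?ltW // sub0r opprK.
Qed.

Section FiniteJensen.
Variables (R : realType) (S : R -> Prop) (f : R -> R).
Hypothesis S_convex :
  forall x y t, S x -> S y -> 0 <= t -> t <= 1 -> S (t * x + (1 - t) * y).
Hypothesis f_convex : convex_on S f.

Lemma convex_on_jensen (n : nat) (c p : 'I_n.+1 -> R) :
  (forall k, S (c k)) -> (forall k, 0 <= p k) -> \sum_(k < n.+1) p k = 1 ->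
  S (\sum_(k < n.+1) p k * c k) /\
  f (\sum_(k < n.+1) p k * c k) <= \sum_(k < n.+1) p k * f (c k).
Proof.
elim: n c p => [|n IH] c p hc hp.
  by rewrite !big_ord1 => ->; rewrite !mul1r.
rewrite !(big_ord_recr n.+1) /=.
set w := widen_ord (leqnSn n.+1); set q := \sum_(i < n.+1) p (w i) => hsum.
have q_ge0 : 0 <= q by apply: sumr_ge0.
have q_le1 : q <= 1 by have := hp ord_max; lra.
have -> : p ord_max = 1 - q by lra.
have [q0|q_neq0] := eqVneq q 0.
  have p0 i : p (w i) = 0.
    by apply: (psumr_eq0P (P := predT) (F := p \o w) _ q0) => // j _; exact: hp.
  rewrite !big1 => [|i _|i _]; rewrite ?p0 ?mul0r //.
  by rewrite q0 subr0 !mul1r !add0r.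
pose r i := p (w i) / q.
have sum_r : \sum_(i < n.+1) r i = 1 by rewrite -mulr_suml divff.
have [Sc fc] := IH (fun i => c (w i)) r (fun i => hc _) (fun i => divr_ge0 (hp _) q_ge0) sum_r.
have rescale (g : R -> R) :
    \sum_(i < n.+1) p (w i) * g (c (w i)) = q * \sum_(i < n.+1) r i * g (c (w i)).
  by rewrite mulr_sumr; apply: eq_bigr => i _; rewrite /r mulrA [q * _]mulrCA divff // mulr1.
rewrite (rescale id) (rescale f) /=; split; first exact: S_convex.
apply: le_trans (f_convex Sc (hc _) q_ge0 q_le1) _.
by rewrite lerD2r ler_wpM2l.
Qed.

End FiniteJensen.

Section OddConvex.
Variables (R : realType) (I : R -> Prop) (f : R -> R).
Hypothesis I_interval : is_interval_set I.
Hypothesis I0 : I 0.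
Hypothesis f_convex : convex_on (fun x => I x /\ 0 <= x) f.
Hypothesis f_odd : forall x, I x -> I (- x) -> f (- x) = - f x.

Lemma odd_fun0 : f 0 = 0.
Proof. by have := @f_odd 0 I0; rewrite oppr0 => /(_ I0); lra. Qed.

Lemma nonneg_interval_convex (x y t : R) :
  I x /\ 0 <= x -> I y /\ 0 <= y -> 0 <= t -> t <= 1 ->
  I (t * x + (1 - t) * y) /\ 0 <= t * x + (1 - t) * y.
Proof.
move=> [Ix x0] [Iy y0] t0 t1.
by split; [exact: interval_convex_comb | nra].
Qed.

(* [x] is the convex combination [(x / y) y + (1 - x / y) 0]. *)
Lemma convex_chord0 (x y : R) : 0 <= x -> x <= y -> I y -> y * f x <= x * f y.
Proof.
move=> x0 xy Iy; have [y0|y_neq0] := eqVneq y 0.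
  have -> : x = 0 by lra.
  by rewrite y0 !mul0r.
have y_gt0 : 0 < y by rewrite lt_neqAle eq_sym y_neq0; lra.
have t0 : 0 <= x / y by rewrite divr_ge0 //; lra.
have t1 : x / y <= 1 by rewrite ler_pdivrMr // mul1r.
have := f_convex (conj Iy (ltW y_gt0)) (conj I0 (lexx _)) t0 t1.
rewrite odd_fun0 !mulr0 !addr0 divfK ?gt_eqF // => fx.
by rewrite mulrC -ler_pdivlMr // mulrAC.
Qed.

Lemma odd_fun_split (x : R) : I x -> I (Num.max (- x) 0) ->
  f x = f (Num.max x 0) - f (Num.max (- x) 0).
Proof.
move=> Ix; have [x_ge0|x_lt0] := leP 0 x.
  by move=> _; rewrite max_r ?oppr_le0 // odd_fun0 subr0.
rewrite max_l ?oppr_ge0 ?ltW // => Inx.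
by rewrite odd_fun0 f_odd // opprK add0r.
Qed.

Lemma convex_chord0_wsum (n : nat) (s : R) (b p : 'I_n.+1 -> R) :
  I s -> (forall k, 0 <= p k) -> (forall k, 0 <= b k <= s) ->
  s * \sum_(k < n.+1) p k * f (b k) <= (\sum_(k < n.+1) p k * b k) * f s.
Proof.
move=> Is hp hb; rewrite mulr_sumr mulr_suml; apply: ler_sum => k _.
have /andP[b0 bs] := hb k.
by rewrite mulrCA -mulrA ler_wpM2l // convex_chord0.
Qed.

Lemma odd_chord0_sub (n : nat) (s C : R) (b p : 'I_n.+1 -> R) :
  I C -> 0 <= s -> s <= C -> (forall k, 0 <= p k) -> (forall k, 0 <= b k <= s) ->
  C - \sum_(k < n.+1) p k * b k = s ->
  f s <= f C - \sum_(k < n.+1) p k * f (b k).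
Proof.
move=> IC s_ge0 sC hp hb; set B := \sum_(k < n.+1) p k * b k => s_CB.
have Is : I s by apply: (I_interval I0 IC).
have [s0|s_neq0] := eqVneq s 0.
  have b0 k : b k = 0 by have /andP[] := hb k; lra.
  rewrite big1 => [|k _]; last by rewrite b0 odd_fun0 mulr0.
  have B0 : B = 0 by apply: big1 => k _; rewrite b0 mulr0.
  have -> : C = s by lra.
  by rewrite subr0.
have s_gt0 : 0 < s by rewrite lt_neqAle eq_sym s_neq0.
have fC : C * f s <= s * f C by apply: convex_chord0.
have fb := convex_chord0_wsum Is hp hb; rewrite -/B in fb.
rewrite -(ler_pM2l s_gt0) mulrBr.
have : s * f s = C * f s - B * f s by rewrite -mulrBl s_CB.
lra.
Qed.

Lemma odd_convex_jensen (n : nat) (a p : 'I_n.+1 -> R) :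
  (forall k, I (a k)) -> (forall k, 0 <= p k) -> \sum_(k < n.+1) p k = 1 ->
  (forall k, - a k <= \sum_(k < n.+1) p k * a k) ->
  f (\sum_(k < n.+1) p k * a k) <= \sum_(k < n.+1) p k * f (a k).
Proof.
move=> ha hp hsum hneg; set s := \sum_(k < n.+1) p k * a k in hneg *.
have s_ge0 : 0 <= s.
  have : - s <= s by apply: wavg_ge => // k; rewrite lerNl hneg.
  lra.
pose c k := Num.max (a k) 0; pose b k := Num.max (- a k) 0.
have Sc k : I (c k) /\ 0 <= c k.
  by rewrite /c le_max lexx orbT; case: leP => // _; split.
have hb k : 0 <= b k <= s by rewrite le_max ge_max lexx orbT hneg.
have [[IC _] fC] := convex_on_jensen nonneg_interval_convex f_convex Sc hp hsum.
set C := \sum_(k < n.+1) p k * c k in IC fC.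
have s_CB : C - \sum_(k < n.+1) p k * b k = s.
  by rewrite -sumrB; apply: eq_bigr => k _; rewrite -mulrBr max0_subr_max0N.
have sC : s <= C.
  rewrite -s_CB gerBl sumr_ge0 // => k _.
  by have /andP[b0 _] := hb k; rewrite mulr_ge0.
have Ib k : I (b k).
  by have /andP[b0 bs] := hb k; apply: (I_interval I0 (I_interval I0 IC s_ge0 sC)).
rewrite (eq_bigr (fun k => p k * f (c k) - p k * f (b k))); last first.
  by move=> k _; rewrite -mulrBr (odd_fun_split (ha k) (Ib k)).
rewrite sumrB; apply: le_trans (odd_chord0_sub IC s_ge0 sC hp hb s_CB) _.
by rewrite lerD2r.
Qed.

End OddConvex.

Theorem corollary2 (R : realType) (I : R -> Prop) (f : R -> R)
  (hI : is_interval_set I) (h0 : I 0)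
  (hconv : convex_on (fun x => I x /\ 0 <= x) f)
  (hodd : forall x : R, I x -> I (- x) -> f (- x) = - f x)
  (n : nat) (a p : 'I_n.+1 -> R)
  (ha : forall k, I (a k))
  (hp : forall k, 0 <= p k)
  (hsum : \sum_(k < n.+1) p k = 1)
  (hmin : 0 <= \sum_(k < n.+1) p k * a k + \big[Num.min/a ord0]_(k < n.+1) a k) :
  f (\sum_(k < n.+1) p k * a k) <= \sum_(k < n.+1) p k * f (a k).
Proof.
apply: (odd_convex_jensen hI h0 hconv hodd) => // k.
have : \big[Num.min/a ord0]_(j < n.+1) a j <= a k by exact: bigmin_le.
lra.
Qed.
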